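(* Let $\mathcal{T}=(V,A,E,f,q)$ be a decorated tree and let $\eta\in\mathrm{Cent}(\mathcal{T})$. There exists a unique decorated tree $\mathcal{T}^{(\eta)}$ satisfying: (i) $\mathcal{T}^{(\eta)}=(V,A,E,f,q^* )$ for some $q^*$; (ii) $q^*(e,\eta)=q(e,\eta)$ for all edges $e$ containing $\eta$; (iii) $q^*(e,v)=q(e,v)$ for all $v\in V\setminus\{\eta\}$ and all edges $e$ containing $v$ and not in $\gamma_{\eta,v}$; (iv) if $e=\{\eta,v\}$ is an edge with $v\in V$, then $q^*(e,v)=Q(e,v)-q(e,v)$; (v) if $e=\{u,v\}$ is an edge with $u,v\in V\setminus\{\eta\}$, then $\det^*(e)=-\det(e)$, where $\det(e)$ is computed in $\mathcal{T}$ and $\det^*(e)$ in $\mathcal{T}^{(\eta)}$. Moreover, $\mathcal{T}^{(\eta)}$ satisfies: (vi) if $v\in V\setminus\{\eta\}$ and $e$ is the unique edge in $\gamma_{\eta,v}$ containing $v$, then $Q(e,v)$ divides $q(e,v)+q^*(e,v)$.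
   Context: A graph is a pair $(X_0,X_1)$ of finite sets such that each element of $X_1$ (an edge) is a $2$-element subset of $X_0$; elements of $X_0$ are cells. A path is a tuple $(x_0,\dots,x_n)$ ($n\ge0$) of cells with $\{x_i,x_{i+1}\}$ an edge for each $i<n$, these edges pairwise distinct; a cell/edge is in the path if it is some $x_i$ / some $\{x_i,x_{i+1}\}$. The graph is a tree if any two cells $x,y$ are joined by a unique path $\gamma_{x,y}$. A decorated tree is $(V,A,E,f,q)$ with $V$ (vertices), $A$ (arrows) finite disjoint sets, $(V\cup A,E)$ a tree, every arrow contained in exactly one edge, $f:A\to\mathbb{Z}$, $q(e,x)\in\mathbb{Z}$ for each $e\in E$, $x\in e$, with $q(e,\alpha)=1$ for $\alpha\in A$, and for each $v\in V$ and distinct edges $e,e'\ni v$, $\gcd(q(e,v),q(e',v))=1$. For $x\in V\cup A$, $e\ni x$: $Q(e,x)=\prod q(e',x)$ over edges $e'\ne e$ containing $x$ (empty product $=1$); for an edge $e=\{x,y\}$, $\det(e)=q(e,x)q(e,y)-Q(e,x)Q(e,y)$. A path $(w_1,\dots,w_m)$ with $m\ge2$ satisfies $(+)$ if every edge $e\ni w_m$ other than $\{w_{m-1},w_m\}$ has $q(e,w_m)\ge1$ and at most one such edge has $q(e,w_m)>1$. An element $x\in V\cup A$ is central if $\gamma_{x,v}$ satisfies $(+)$ for every $v\in V\setminus\{x\}$; $\mathrm{Cent}(\mathcal{T})$ is the set of central elements. *)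

From mathcomp Require Import all_boot all_order all_algebra.
Set Implicit Arguments. Unset Strict Implicit. Unset Printing Implicit Defensive.
Import Order.TTheory GRing.Theory Num.Theory.
Local Open Scope ring_scope.

Section DecoratedTrees.
Variable T : finType.

(* Cells are the elements of V :|: A; edges E : {set {set T}};
   q is encoded as a function q e x : int (only relevant for e \in E, x \in e). *)

Definition pedges (p : seq T) : seq {set T} :=
  match p with
  | [::] => [::]
  | x :: s => pairmap (fun a b => [set a; b]) x s
  end.

Definition is_graph (C : {set T}) (E : {set {set T}}) : Prop :=
  forall e, e \in E -> #|e| = 2%N /\ e \subset C.

Definition is_path (C : {set T}) (E : {set {set T}}) (p : seq T) : bool :=
  [&& p != [::], all (fun x => x \in C) p,
      all (fun e => e \in E) (pedges p) & uniq (pedges p)].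

Definition path_from_to (C : {set T}) (E : {set {set T}}) (x y : T) (p : seq T) : Prop :=
  is_path C E p /\ head y p = x /\ last x p = y.

Definition is_tree (C : {set T}) (E : {set {set T}}) : Prop :=
  is_graph C E /\
  forall x y, x \in C -> y \in C -> exists! p, path_from_to C E x y p.

Definition Qf (E : {set {set T}}) (q : {set T} -> T -> int) (e : {set T}) (x : T) : int :=
  \prod_(e' in E | (x \in e') && (e' != e)) q e' x.

Definition detf (E : {set {set T}}) (q : {set T} -> T -> int) (x y : T) : int :=
  let e := [set x; y] in q e x * q e y - Qf E q e x * Qf E q e y.

Definition decorated (V A : {set T}) (E : {set {set T}}) (f : T -> int)
    (q : {set T} -> T -> int) : Prop :=
  [disjoint V & A] /\
  is_tree (V :|: A) E /\
  (forall a, a \in A -> #|[set e in E | a \in e]| = 1%N) /\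
  (forall a e, a \in A -> e \in E -> a \in e -> q e a = 1) /\
  (forall v e e', v \in V -> e \in E -> e' \in E -> v \in e -> v \in e' ->
     e != e' -> gcdz (q e v) (q e' v) = 1).

Definition plus_cond (E : {set {set T}}) (q : {set T} -> T -> int) (p : seq T) : Prop :=
  match p with
  | [::] => False
  | x :: s =>
      let wm := last x s in
      let le := last set0 (pedges p) in
      [/\ (0 < size s)%N,
           (forall e, e \in E -> wm \in e -> e != le -> (1 <= q e wm)%R) &
           (#|[set e in E | [&& wm \in e, e != le & (1 < q e wm)%R]]| <= 1)%N]
  end.

Definition central (V A : {set T}) (E : {set {set T}}) (q : {set T} -> T -> int)
    (x : T) : Prop :=
  x \in V :|: A /\
  forall v p, v \in V -> v != x -> path_from_to (V :|: A) E x v p -> plus_cond E q p.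
End DecoratedTrees.

(* Root the tree at eta and let e_v be the last edge of the path from eta to v.
   Conditions (i)-(iii) fix q* everywhere except at the pairs (e_v, v), and
   for e_v = {u, v} with u <> eta condition (v) reads
     q(e_v,u) q*(e_v,v) = Q*(e_v,u) Q(e_v,v) - det(e_v),
   where Q*(e_v,u) involves q* only through q*(e_u,u).  Centrality makes
   q(e_v,u) >= 1, so q*(e_v,v) is determined by q*(e_u,u): this gives uniqueness
   and a recursive construction along the paths from eta, starting from (iv).
   Exact division is carried by (vi): writing Q(e_u,u) = q(e_v,u) P, (vi) at u
   means q*(e_u,u) = k q(e_v,u) P - q(e_u,u), and then the equation above has the
   solution q*(e_v,v) = k P^2 Q(e_v,v) - q(e_v,v), which is (vi) at v and also
   yields the coprimality required of a decorated tree. *)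

From mathcomp Require Import all_boot all_order all_algebra.
From mathcomp Require Import ring zify.
From Stdlib Require Import ClassicalEpsilon.
Set Implicit Arguments. Unset Strict Implicit. Unset Printing Implicit Defensive.
Import Order.TTheory GRing.Theory Num.Theory.
Local Open Scope ring_scope.

Section PathEdges.
Variable T : finType.
Implicit Types (C : {set T}) (E : {set {set T}}) (x y z : T) (s : seq T).

Lemma pedges_rcons y s x :
  pedges (rcons (y :: s) x) = rcons (pedges (y :: s)) [set last y s; x].
Proof. by rewrite /= -cats1 pairmap_cat cats1. Qed.

Lemma pedges_cat y s1 s2 :
  pedges (y :: s1 ++ s2) = pedges (y :: s1) ++ pedges (last y s1 :: s2).
Proof. by rewrite /= pairmap_cat. Qed.

Lemma pedges_endpoint y s z e : e \in pedges (y :: s) -> z \in e -> z \in y :: s.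
Proof.
elim: s y => [|x s IHs] y //=; rewrite inE => /orP[/eqP-> | e_s].
  by rewrite !inE => /orP[] ->; rewrite ?orbT.
by move=> z_e; rewrite inE (IHs x e_s z_e) orbT.
Qed.

Lemma is_path_prefix C E y s1 s2 :
  is_path C E (y :: s1 ++ s2) -> is_path C E (y :: s1).
Proof.
case/and4P=> _ allC allE uniqE; apply/and4P; split => //.
- by move: allC; rewrite /= all_cat => /andP[-> /andP[]].
- by move: allE; rewrite pedges_cat all_cat => /andP[].
- by move: uniqE; rewrite pedges_cat cat_uniq => /andP[].
Qed.

Lemma is_path_rcons C E y s x :
  is_path C E (y :: s) -> x \in C -> [set last y s; x] \in E ->
  [set last y s; x] \notin pedges (y :: s) -> is_path C E (rcons (y :: s) x).
Proof.
case/and4P=> _ allC allE uniqE xC eE e_new; apply/and4P; split => //.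
- by rewrite -cats1 all_cat allC /= xC.
- by rewrite pedges_rcons -cats1 all_cat allE /= eE.
- by rewrite pedges_rcons rcons_uniq e_new uniqE.
Qed.

End PathEdges.

Section Decorations.
Variables (T : finType) (E : {set {set T}}).
Implicit Types (g : {set T} -> T -> int) (e : {set T}) (x : T).

Lemma eq_Qf g1 g2 e x :
  (forall e', e' \in E -> x \in e' -> e' != e -> g1 e' x = g2 e' x) ->
  Qf E g1 e x = Qf E g2 e x.
Proof. by move=> eq_g; apply: eq_bigr => e' /andP[e'E /andP[x_e' e'e]]; apply: eq_g. Qed.

Lemma Qf_bigD1 g e1 e x :
  e1 \in E -> x \in e1 -> e1 != e ->
  Qf E g e x = g e1 x * \prod_(e' in E | [&& x \in e', e' != e1 & e' != e]) g e' x.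
Proof.
move=> e1E x_e1 e1e; rewrite /Qf (bigD1 e1) /=; last by rewrite e1E x_e1 e1e.
congr (_ * _); apply: eq_bigl => e'.
by case: (e' \in E); case: (x \in e'); case: (e' != e1); case: (e' != e).
Qed.

Lemma detfC g u v : detf E g u v = detf E g v u.
Proof. by rewrite /detf setUC (mulrC (g _ u)) (mulrC (Qf _ _ _ u)). Qed.

End Decorations.

Section RootedTree.
Variables (T : finType) (C : {set T}) (E : {set {set T}}) (eta : T).
Hypotheses (tree : is_tree C E) (etaC : eta \in C).
Implicit Types (u v w : T) (e : {set T}).

Lemma edge_card2 e : e \in E -> #|e| = 2%N.
Proof. by case/(tree.1 e). Qed.

Lemma edge_sub e x : e \in E -> x \in e -> x \in C.
Proof. by move=> eE; case/(tree.1 e): eE => _ /subsetP; apply. Qed.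

Lemma loop_notin_edges x : [set x; x] \notin E.
Proof. by apply/negP => /edge_card2; rewrite setUid cards1. Qed.

Lemma edge_set2 e v w : e \in E -> v \in e -> w \in e -> v != w -> e = [set v; w].
Proof.
move=> eE ve we vw; apply/eqP; rewrite eq_sym eqEcard edge_card2 // cards2 vw andbT.
by apply/subsetP => x; rewrite !inE => /orP[] /eqP->.
Qed.

Definition rpath v : seq T := epsilon (inhabits [::]) (path_from_to C E eta v).

Lemma rpathP v : v \in C -> path_from_to C E eta v (rpath v).
Proof.
move=> vC; apply: epsilon_spec.
by have [p [p_path _]] := tree.2 eta v etaC vC; exists p.
Qed.

Lemma rpath_unique v p : v \in C -> path_from_to C E eta v p -> p = rpath v.
Proof.
move=> vC p_path; have [p0 [_ uniq_p0]] := tree.2 eta v etaC vC.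
by rewrite -(uniq_p0 _ p_path) (uniq_p0 _ (rpathP vC)).
Qed.

Lemma rpath_root : rpath eta = [:: eta].
Proof. by symmetry; apply: rpath_unique; rewrite // /path_from_to /is_path /= etaC. Qed.

Lemma rpath_head v : v \in C -> exists s, rpath v = eta :: s.
Proof.
move=> vC; have [/and4P[nil_p _ _ _] [head_p _]] := rpathP vC.
by move: nil_p head_p; case: (rpath v) => // y s _ /= ->; exists s.
Qed.

Lemma rpath_last v : v \in C -> last eta (rpath v) = v.
Proof. by case/rpathP=> _ []. Qed.

Lemma mem_rpath v : v \in C -> v \in rpath v.
Proof.
move=> vC; have [s def_p] := rpath_head vC.
by have := rpath_last vC; rewrite def_p /= => {1}<-; apply: mem_last.
Qed.

Lemma rpath_prefix s1 s2 :
  is_path C E (eta :: s1 ++ s2) -> rpath (last eta s1) = eta :: s1.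
Proof.
move/is_path_prefix => s1_path; symmetry; apply: rpath_unique; last by [].
by case/and4P: s1_path => _ /allP/(_ _ (mem_last _ _)).
Qed.

Lemma rpath_split v : v \in C -> v != eta -> exists u,
  [/\ rpath v = rcons (rpath u) v, u \in C, [set u; v] \in E & v \notin rpath u].
Proof.
move=> vC v_eta; have [s def_p] := rpath_head vC.
have [p_path _] := rpathP vC; have := rpath_last vC; rewrite def_p /=.
case/lastP: s def_p p_path => [-> _ /eqP|s y]; first by rewrite eq_sym (negbTE v_eta).
rewrite last_rcons -cats1 => def_p p_path y_v; subst y.
rewrite def_p in p_path.
have u_path := rpath_prefix p_path.
exists (last eta s); split.
- by rewrite u_path cats1.
- by case/and4P: (is_path_prefix p_path) => _ /allP/(_ _ (mem_last _ _)).
- case/and4P: p_path => _ _ /allP allE _; apply: allE.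
  by rewrite pedges_cat mem_cat /= inE eqxx orbT.
rewrite u_path; apply/negP => v_s; move: def_p p_path.
case/splitPl: v_s => s1 s2 last_s1 def_p; rewrite -catA => /rpath_prefix.
by rewrite last_s1 def_p => -[] /(congr1 size); rewrite !size_cat /=; lia.
Qed.

Definition parent v : T := last eta (belast eta (rpath v)).

Lemma parent_spec v : v \in C -> v != eta ->
  [/\ rpath v = rcons (rpath (parent v)) v, parent v \in C,
      [set parent v; v] \in E & v \notin rpath (parent v)].
Proof.
move=> vC v_eta; have [u [def_p uC uvE v_u]] := rpath_split vC v_eta.
suff -> : parent v = u by [].
by rewrite /parent def_p belast_rcons /= rpath_last.
Qed.

Lemma rev_rpath v : v \in C -> exists r, rev (rpath v) = v :: r.
Proof.
move=> vC; have [s def_p] := rpath_head vC.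
exists (rev (belast eta s)); rewrite def_p lastI rev_rcons.
by have := rpath_last vC; rewrite def_p /= => ->.
Qed.

Lemma rpath_last_edge v : v \in C -> v != eta ->
  last set0 (pedges (rpath v)) = [set parent v; v].
Proof.
move=> vC v_eta; have [def_p uC _ _] := parent_spec vC v_eta.
have [s def_pu] := rpath_head uC; have := rpath_last uC; rewrite def_pu /= => last_s.
by rewrite def_p def_pu pedges_rcons last_rcons last_s.
Qed.

Lemma parent_neq v : v \in C -> v != eta -> parent v != v.
Proof.
move=> vC v_eta; have [_ _ _] := parent_spec vC v_eta.
by apply: contraNneq => ->; apply: mem_rpath.
Qed.

Lemma parent_edge_in_rpath v : v \in C -> v != eta -> [set parent v; v] \in pedges (rpath v).
Proof.
move=> vC v_eta; have [def_p uC _ _] := parent_spec vC v_eta.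
have [s def_pu] := rpath_head uC; have := rpath_last uC; rewrite def_pu /= => last_s.
by rewrite def_p def_pu pedges_rcons last_s mem_rcons mem_head.
Qed.

Lemma rpath_edge_at_end v e : v \in C -> v != eta ->
  e \in pedges (rpath v) -> v \in e -> e = [set parent v; v].
Proof.
move=> vC v_eta; have [def_p uC _ v_pu] := parent_spec vC v_eta.
have [s def_pu] := rpath_head uC; have := rpath_last uC; rewrite def_pu /= => last_s.
rewrite def_p def_pu pedges_rcons last_s mem_rcons inE.
case/orP=> [/eqP // | e_pu v_e].
by move: v_pu; rewrite def_pu (pedges_endpoint e_pu v_e).
Qed.

Lemma notin_rpath_edges v e : v \in C -> v != eta -> v \in e -> e != [set parent v; v] ->
  forall p, path_from_to C E eta v p -> e \notin pedges p.
Proof.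
move=> vC v_eta v_e e_par p p_path; rewrite (rpath_unique vC p_path).
by apply: contra e_par => e_p; rewrite (rpath_edge_at_end vC v_eta e_p v_e).
Qed.

Lemma parent_parent_edge v : v \in C -> v != eta -> parent v != eta ->
  [set parent (parent v); parent v] != [set parent v; v].
Proof.
move=> vC v_eta u_eta; have [_ uC _ v_pu] := parent_spec vC v_eta.
have [def_pu _ _ _] := parent_spec uC u_eta.
apply/eqP => same_edge; have : v \in [set parent (parent v); parent v].
  by rewrite same_edge set22.
rewrite !inE => /orP[/eqP v_w | /eqP v_u].
  by move: v_pu; rewrite def_pu mem_rcons inE -v_w mem_rpath ?orbT.
by move: (parent_neq vC v_eta); rewrite -v_u eqxx.
Qed.

Lemma edge_child_parent v w e : v \in C -> e \in E -> v \in e -> w \in e -> w != v ->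
  e \notin pedges (rpath v) -> parent w = v.
Proof.
move=> vC eE v_e w_e w_v e_new.
have def_e : e = [set v; w] by apply: edge_set2; rewrite // eq_sym.
have [s def_p] := rpath_head vC; have := rpath_last vC; rewrite def_p /= => last_s.
have w_path : path_from_to C E eta w (rcons (rpath v) w).
  split; last by rewrite def_p /= last_rcons.
  have [p_path _] := rpathP vC; rewrite def_p in p_path e_new *.
  by apply: is_path_rcons; rewrite /= ?last_s -?def_e // (edge_sub eE w_e).
by rewrite /parent -(rpath_unique (edge_sub eE w_e) w_path) belast_rcons /= rpath_last.
Qed.

Lemma parent_ind (P : T -> Prop) :
  (forall v, v \in C -> v != eta -> (parent v != eta -> P (parent v)) -> P v) ->
  forall v, v \in C -> v != eta -> P v.
Proof.
move=> IH v; move: {2}(size (rpath v)) (leqnn (size (rpath v))) => n.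
elim: n v => [|n IHn] v size_v vC v_eta.
  by have [s def_p] := rpath_head vC; rewrite def_p in size_v.
have [def_p uC _ _] := parent_spec vC v_eta.
apply: IH => // u_eta; apply: IHn => //.
by move: size_v; rewrite def_p size_rcons.
Qed.

End RootedTree.

Section Flip.
Variables (T : finType) (V A : {set T}) (E : {set {set T}}) (f : T -> int)
  (q : {set T} -> T -> int) (eta : T).
Local Notation C := (V :|: A).
Hypotheses (dec : decorated V A E f q) (cent : central V A E q eta).

Let tree : is_tree C E := dec.2.1.
Let etaC : eta \in C := cent.1.
Local Notation rpath := (rpath C E eta).
Local Notation parent := (parent C E eta).

Lemma parent_in_V v : v \in C -> v != eta -> parent v != eta -> parent v \in V.
Proof.
move=> vC v_eta u_eta; have [_ uC uvE _] := parent_spec tree etaC vC v_eta.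
have [_ _ wuE _] := parent_spec tree etaC uC u_eta.
have [_ [_ [arrow_deg1 _]]] := dec.
move: uC; rewrite inE => /orP[// | /arrow_deg1 deg1].
have : (#|[set [set parent (parent v); parent v]; [set parent v; v]]| <= 1)%N.
  by rewrite -deg1; apply/subset_leq_card/subsetP => e; rewrite !inE => /orP[] /eqP->;
     rewrite ?wuE ?uvE ?set21 ?set22.
by rewrite cards2 parent_parent_edge.
Qed.

Lemma q_child_edge_neq0 u e : u \in V -> u != eta -> e \in E -> u \in e ->
  e != [set parent u; u] -> q e u != 0.
Proof.
move=> uV u_eta eE u_e e_par; have uC : u \in C by rewrite inE uV.
have := cent.2 u _ uV u_eta (rpathP tree etaC uC).
have := rpath_last_edge tree etaC uC u_eta; have := rpath_last tree etaC uC.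
case: (rpath u) => [//| x s] /= -> -> [_ q_ge1 _].
by apply: contraTneq (q_ge1 e eE u_e e_par) => ->.
Qed.

Definition upd (g : {set T} -> T -> int) e0 x0 (a : int) : {set T} -> T -> int :=
  fun e x => if (e == e0) && (x == x0) then a else g e x.

(* Solves (v) on {u, v} for q*({u,v}, v) when q*({w,u}, u) = a; the division is
   exact by [flip_value_spec]. *)
Definition flip_value (a : int) (w u v : T) : int :=
  ((Qf E (upd q [set w; u] u a) [set u; v] u * Qf E q [set u; v] v - detf E q u v)
     %/ q [set u; v] u)%Z.

(* [flip_along] runs along the reversed root path [v; parent v; ...; eta]. *)
Fixpoint flip_along (r : seq T) : int :=
  if r is v :: r' then
    if r' is u :: r'' then
      if r'' is w :: _ then flip_value (flip_along r') w u v
      else Qf E q [set u; v] v - q [set u; v] v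
    else 0
  else 0.

Definition qstar_at v : int := flip_along (rev (rpath v)).

Definition qstar (e : {set T}) (x : T) : int :=
  if [&& x \in V, x != eta & e == [set parent x; x]] then qstar_at x else q e x.

Definition flip_conditions (qs : {set T} -> T -> int) : Prop :=
  [/\ decorated V A E f qs,
      (forall e, e \in E -> eta \in e -> qs e eta = q e eta),
      (forall v e, v \in V -> v != eta -> e \in E -> v \in e ->
         (forall p, path_from_to C E eta v p -> e \notin pedges p) ->
         qs e v = q e v),
      (forall v, v \in V -> [set eta; v] \in E ->
         qs [set eta; v] v = Qf E q [set eta; v] v - q [set eta; v] v) &
      (forall u v, u \in V -> v \in V -> u != eta -> v != eta ->
         [set u; v] \in E -> detf E qs u v = - detf E q u v)].

Lemma qstar_at_root_child v : v \in C -> v != eta -> parent v = eta ->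
  qstar_at v = Qf E q [set eta; v] v - q [set eta; v] v.
Proof.
move=> vC v_eta u_eta; have [def_p _ _ _] := parent_spec tree etaC vC v_eta.
by rewrite /qstar_at def_p u_eta rpath_root.
Qed.

Lemma qstar_at_parent v : v \in C -> v != eta -> parent v != eta ->
  qstar_at v = flip_value (qstar_at (parent v)) (parent (parent v)) (parent v) v.
Proof.
move=> vC v_eta u_eta; have [def_p uC _ _] := parent_spec tree etaC vC v_eta.
have [def_pu wC _ _] := parent_spec tree etaC uC u_eta.
have [r def_rw] := rev_rpath tree etaC wC.
by rewrite /qstar_at def_p def_pu !rev_rcons def_rw.
Qed.

Lemma flip_value_spec a w u v :
  [set w; u] \in E -> [set u; v] \in E -> [set u; v] != [set w; u] ->
  q [set u; v] u != 0 -> (Qf E q [set w; u] u %| q [set w; u] u + a)%Z ->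
  q [set u; v] u * flip_value a w u v =
    Qf E (upd q [set w; u] u a) [set u; v] u * Qf E q [set u; v] v - detf E q u v
  /\ (Qf E q [set u; v] v %| q [set u; v] v + flip_value a w u v)%Z.
Proof.
rewrite /flip_value /detf; set eu := [set w; u]; set e := [set u; v].
move=> euE eE e_eu que_neq0 /dvdzP[k def_a].
have u_e : u \in e by rewrite set21.
have u_eu : u \in eu by rewrite set22.
have eu_e : eu != e by rewrite eq_sym.
set P := \prod_(e' in E | [&& u \in e', e' != e & e' != eu]) q e' u.
have Qeu : Qf E q eu u = q e u * P by rewrite (Qf_bigD1 q eE u_e e_eu).
have Qe : Qf E q e u = q eu u * P.
  rewrite (Qf_bigD1 q euE u_eu eu_e); congr (_ * _); apply: eq_bigl => e'.
  by case: (e' \in E); case: (u \in e'); case: (e' != e); case: (e' != eu).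
have Qe_upd : Qf E (upd q eu u a) e u = a * P.
  rewrite (Qf_bigD1 _ euE u_eu eu_e) /upd !eqxx; congr (_ * _).
  apply: eq_big => [e' | e' /andP[_ /and3P[_ e'_eu _]]]; last by rewrite (negbTE e'_eu).
  by case: (e' \in E); case: (u \in e'); case: (e' != e); case: (e' != eu).
have {}def_a : a = k * (q e u * P) - q eu u by rewrite -Qeu -def_a; ring.
have num : Qf E (upd q eu u a) e u * Qf E q e v - (q e u * q e v - Qf E q e u * Qf E q e v)
    = q e u * (k * P * P * Qf E q e v - q e v).
  by rewrite Qe_upd Qe def_a; ring.
rewrite num mulKz //; split=> //.
by apply/dvdzP; exists (k * P * P); ring.
Qed.

Lemma qstar_at_dvd v : v \in V -> v != eta ->
  (Qf E q [set parent v; v] v %| q [set parent v; v] v + qstar_at v)%Z.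
Proof.
move=> vV v_eta; have vC : v \in C by rewrite inE vV.
move: v vC v_eta vV; apply: (parent_ind tree etaC) => v vC v_eta IH vV.
have [_ uC uvE _] := parent_spec tree etaC vC v_eta.
case: (eqVneq (parent v) eta) => [u_eta | u_eta].
  by rewrite qstar_at_root_child // u_eta addrC subrK dvdzz.
have uV := parent_in_V vC v_eta u_eta.
have [_ _ wuE _] := parent_spec tree etaC uC u_eta.
have e_eu : [set parent v; v] != [set parent (parent v); parent v].
  by rewrite eq_sym parent_parent_edge.
rewrite qstar_at_parent //; apply: (flip_value_spec _ _ _ _ (IH u_eta uV)).2 => //.
by apply: q_child_edge_neq0; rewrite ?set21.
Qed.

Lemma qstar_at_coprime v e : v \in V -> v != eta -> e \in E -> v \in e ->
  e != [set parent v; v] -> gcdz (qstar_at v) (q e v) = 1.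
Proof.
move=> vV v_eta eE v_e e_par; have vC : v \in C by rewrite inE vV.
have [_ _ uvE _] := parent_spec tree etaC vC v_eta.
have /dvdzP[k] := qstar_at_dvd vV v_eta; rewrite (Qf_bigD1 q eE v_e) //.
set R := \prod_(_ in _ | _) _ => def_k.
have -> : qstar_at v = k * R * q e v + - q [set parent v; v] v.
  by apply: (addrI (q [set parent v; v] v)); rewrite def_k; ring.
rewrite gcdzC gcdzMDl gcdzN gcdzC.
have [_ [_ [_ [_ coprime_q]]]] := dec.
by apply: coprime_q; rewrite ?set22 // eq_sym.
Qed.

Lemma detf_parent_edge qs v : v \in V -> v != eta -> parent v != eta ->
  qs [set parent v; v] (parent v) = q [set parent v; v] (parent v) ->
  Qf E qs [set parent v; v] v = Qf E q [set parent v; v] v ->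
  Qf E qs [set parent v; v] (parent v) =
    Qf E (upd q [set parent (parent v); parent v] (parent v) (qstar_at (parent v)))
      [set parent v; v] (parent v) ->
  detf E qs (parent v) v + detf E q (parent v) v =
    q [set parent v; v] (parent v) * (qs [set parent v; v] v - qstar_at v).
Proof.
move=> vV v_eta u_eta qs_eu Qs_ev Qs_eu; have vC : v \in C by rewrite inE vV.
have [_ uC uvE _] := parent_spec tree etaC vC v_eta.
have [_ _ wuE _] := parent_spec tree etaC uC u_eta.
have uV := parent_in_V vC v_eta u_eta.
have e_eu : [set parent v; v] != [set parent (parent v); parent v].
  by rewrite eq_sym parent_parent_edge.
have [flip_eq _] := flip_value_spec wuE uvE e_eu
  (q_child_edge_neq0 uV u_eta uvE (set21 _ _) e_eu) (qstar_at_dvd uV u_eta).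
by rewrite qstar_at_parent // mulrBr flip_eq /detf /= qs_eu Qs_ev Qs_eu; ring.
Qed.

Lemma qstar_detf_parent_edge v : v \in V -> v != eta -> parent v != eta ->
  detf E qstar (parent v) v = - detf E q (parent v) v.
Proof.
move=> vV v_eta u_eta; have vC : v \in C by rewrite inE vV.
have uV := parent_in_V vC v_eta u_eta.
apply/eqP; rewrite -addr_eq0 (detf_parent_edge (qs := qstar) vV v_eta u_eta).
- by rewrite /qstar vV v_eta eqxx subrr mulr0.
- by rewrite /qstar uV u_eta eq_sym (negbTE (parent_parent_edge tree etaC vC v_eta u_eta)).
- by apply: eq_Qf => e' _ _ e'_e; rewrite /qstar vV v_eta (negbTE e'_e).
- by apply: eq_Qf => e' _ _ _; rewrite /qstar /upd uV u_eta eqxx andbT.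
Qed.

Lemma flip_conditions_parent_edge qs : flip_conditions qs ->
  forall v, v \in V -> v != eta -> qs [set parent v; v] v = qstar_at v.
Proof.
case=> _ _ qs_off qs_root qs_det v vV v_eta; have vC : v \in C by rewrite inE vV.
move: v vC v_eta vV; apply: (parent_ind tree etaC) => v vC v_eta IH vV.
have [_ uC uvE _] := parent_spec tree etaC vC v_eta.
case: (eqVneq (parent v) eta) => [u_eta | u_eta].
  by rewrite qstar_at_root_child // u_eta qs_root // -u_eta.
have uV := parent_in_V vC v_eta u_eta.
have e_eu : [set parent v; v] != [set parent (parent v); parent v].
  by rewrite eq_sym parent_parent_edge.
have : q [set parent v; v] (parent v) * (qs [set parent v; v] v - qstar_at v) = 0.
  rewrite -(detf_parent_edge (qs := qs) vV v_eta u_eta).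
  - by rewrite (qs_det _ _ uV vV u_eta v_eta uvE) addNr.
  - exact: qs_off _ _ uV u_eta uvE (set21 _ _)
      (notin_rpath_edges tree etaC uC u_eta (set21 _ _) e_eu).
  - apply: eq_Qf => e' e'E v_e' e'_e; apply: qs_off => //.
    exact: notin_rpath_edges.
  - apply: eq_Qf => e' e'E u_e' _; rewrite /upd eqxx andbT.
    case: eqP => [-> | /eqP e'_eu]; first exact: IH.
    by apply: qs_off => //; apply: notin_rpath_edges.
move/eqP; rewrite mulf_eq0 subr_eq0 (negbTE (q_child_edge_neq0 uV u_eta uvE (set21 _ _) e_eu)).
by move/eqP.
Qed.

Lemma qstar_decorated : decorated V A E f qstar.
Proof.
have [disjVA [_ [arrow_deg1 [q_arrow coprime_q]]]] := dec.
do 3 split=> //; split.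
  by move=> a e aA eE a_e; rewrite /qstar (disjointFl disjVA aA) q_arrow.
move=> v e e' vV eE e'E v_e v_e' e_e'; rewrite /qstar vV /=.
case: (eqVneq v eta) => [_ | v_eta] /=; first exact: coprime_q.
case: (eqVneq e [set parent v; v]) => [e_par | e_par];
  case: (eqVneq e' [set parent v; v]) => [e'_par | e'_par] /=.
- by move: e_e'; rewrite e_par e'_par eqxx.
- by rewrite qstar_at_coprime.
- by rewrite gcdzC qstar_at_coprime.
- exact: coprime_q.
Qed.

Lemma qstar_flip : flip_conditions qstar.
Proof.
split.
- exact: qstar_decorated.
- by move=> e _ _; rewrite /qstar eqxx /= andbF.
- move=> v e vV v_eta eE v_e not_on_path; rewrite /qstar vV v_eta /=.
  case: eqP => // e_par; have vC : v \in C by rewrite inE vV.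
  by move: (not_on_path _ (rpathP tree etaC vC)); rewrite e_par parent_edge_in_rpath.
- move=> v vV etavE; have vC : v \in C by rewrite inE vV.
  have v_eta : v != eta.
    by apply: contraTneq _ etavE => ->; exact: (loop_notin_edges tree eta).
  have u_eta : parent v = eta.
    by apply: (edge_child_parent tree etaC etaC etavE (set21 _ _) (set22 _ _) v_eta);
       rewrite rpath_root.
  by rewrite /qstar vV v_eta u_eta eqxx qstar_at_root_child.
- move=> u v uV vV u_eta v_eta uvE; have vC : v \in C by rewrite inE vV.
  have u_v : u != v by apply: contraTneq _ uvE => ->; exact: (loop_notin_edges tree v).
  case: (eqVneq [set u; v] [set parent v; v]) => [e_par | e_par].
    have : u \in [set parent v; v] by rewrite -e_par set21.
    rewrite !inE (negbTE u_v) orbF => /eqP def_u.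
    by rewrite def_u in u_eta *; apply: qstar_detf_parent_edge.
  have v_u : parent u = v.
    apply: (edge_child_parent tree etaC vC uvE (set22 _ _) (set21 _ _) u_v).
    exact: notin_rpath_edges (set22 _ _) e_par _ (rpathP tree etaC vC).
  by rewrite detfC (detfC E q) -v_u qstar_detf_parent_edge // v_u.
Qed.

Lemma flip_conditions_unique qs : flip_conditions qs ->
  forall e x, e \in E -> x \in e -> qs e x = qstar e x.
Proof.
move=> qs_flip e x eE x_e; have xC := edge_sub tree eE x_e.
have [[_ [_ [_ [qs_arrow _]]]] qs_eta qs_off _ _] := qs_flip.
rewrite /qstar; case: (boolP (x \in V)) => [xV | xNV] /=; last first.
  have xA : x \in A by move: xC; rewrite inE (negbTE xNV).
  have [_ [_ [_ [q_arrow _]]]] := dec.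
  by rewrite (qs_arrow _ _ xA eE x_e) (q_arrow _ _ xA eE x_e).
case: (eqVneq x eta) => [x_eta | x_eta] /=; first by rewrite x_eta in x_e *; apply: qs_eta.
case: (eqVneq e [set parent x; x]) => [-> | e_par] /=.
  exact: flip_conditions_parent_edge.
exact: qs_off (notin_rpath_edges tree etaC xC x_eta x_e e_par).
Qed.

Lemma qstar_dvd v p e : v \in V -> v != eta -> path_from_to C E eta v p ->
  e \in pedges p -> v \in e -> (Qf E q e v %| q e v + qstar e v)%Z.
Proof.
move=> vV v_eta p_path e_p v_e; have vC : v \in C by rewrite inE vV.
rewrite (rpath_unique tree etaC vC p_path) in e_p.
rewrite (rpath_edge_at_end tree etaC vC v_eta e_p v_e) /qstar vV v_eta eqxx.
exact: qstar_at_dvd.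
Qed.

End Flip.

Theorem lemma6p5 (T : finType) (V A : {set T}) (E : {set {set T}})
    (f : T -> int) (q : {set T} -> T -> int) (eta : T) :
  decorated V A E f q ->
  central V A E q eta ->
  let C := V :|: A in
  let conds := fun qs : {set T} -> T -> int =>
    [/\ decorated V A E f qs,
        (* (ii) *)
        (forall e, e \in E -> eta \in e -> qs e eta = q e eta),
        (* (iii) *)
        (forall v e, v \in V -> v != eta -> e \in E -> v \in e ->
           (forall p, path_from_to C E eta v p -> e \notin pedges p) ->
           qs e v = q e v),
        (* (iv) *)
        (forall v, v \in V -> [set eta; v] \in E ->
           qs [set eta; v] v = Qf E q [set eta; v] v - q [set eta; v] v) &
        (* (v) *)
        (forall u v, u \in V -> v \in V -> u != eta -> v != eta ->
           [set u; v] \in E -> detf E qs u v = - detf E q u v)] in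
  exists qs,
    [/\ conds qs,
        (* uniqueness (of the decoration q* on pairs (e,x) with x in e in E) *)
        (forall qs', conds qs' -> forall e x, e \in E -> x \in e -> qs' e x = qs e x) &
        (* (vi) *)
        (forall v p e, v \in V -> v != eta -> path_from_to C E eta v p ->
           e \in pedges p -> v \in e ->
           (Qf E q e v %| q e v + qs e v)%Z)].
Proof.
move=> dec cent C conds; exists (qstar V A E q eta); split.
- exact: qstar_flip dec cent.
- exact: flip_conditions_unique dec cent.
- exact: qstar_dvd dec cent.
Qed.
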